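(* Let $(M,\gamma)$ be an $n$-dimensional (pseudo-)Riemannian manifold with local coordinates $q^a$, nondegenerate metric $\gamma_{ab}(q)$, Levi-Civita connection coefficients $\Gamma^a_{bc}(q)$, and let $Q^a(q)$ be a smooth vector field. Consider the autonomous system $$\ddot q^{a}=-\Gamma^{a}_{bc}(q)\dot q^{b}\dot q^{c}-Q^{a}(q).$$ Then each of the following functions is a first integral of this system (i.e. is constant along every solution), provided the stated conditions hold. Indices are raised and lowered with $\gamma$. (CFI 1) Let $\ell\ge 1$ be an integer. Let $L_{(N)ab}(q)$, $N=0,2,\dots,2\ell$, be symmetric tensors such that $L_{(N)(ab;c)}$ is a Killing tensor of order 3 for $N=0,2,\dots,2\ell-2$ and $L_{(2\ell)ab}$ is a Killing tensor of order 2; let $L_{(A)a}(q)$, $A=1,3,\dots,2\ell-1$, be covector fields and $G(q)$ a function satisfying $$L_{(k-1)(a;b)}=-\tfrac{3}{k-1}L_{(k-2)(ab;c)}Q^{c}-kL_{(k)ab},\quad k=2,4,\dots,2\ell,$$ $$\big(L_{(2\ell-1)c}Q^{c}\big)_{,a}=4\ell\,L_{(2\ell)ab}Q^{b},$$ $$\big(L_{(k-2)c}Q^{c}\big)_{,a}=2(k-1)L_{(k-1)ab}Q^{b}-k(k-1)L_{(k)a},\quad k=3,5,\dots,2\ell-1,$$ $$G_{,a}=2L_{(0)ab}Q^{b}-L_{(1)a}.$$ Then $$J^{(3,1)}_{\ell}=\Big(-\sum_{j=0}^{\ell-1}\tfrac{t^{2j+1}}{2j+1}L_{(2j)(ab;c)}\Big)\dot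 q^a\dot q^b\dot q^c+\Big(\sum_{j=0}^{\ell}t^{2j}L_{(2j)ab}\Big)\dot q^a\dot q^b+\Big(\sum_{j=1}^{\ell}t^{2j-1}L_{(2j-1)a}\Big)\dot q^a+\sum_{j=1}^{\ell}\tfrac{t^{2j}}{2j}L_{(2j-1)c}Q^c+G(q)$$ is a first integral. (CFI 2) Let $\ell\ge 0$ be an integer. Let $L_{(0)abc}(q)$ be a totally symmetric Killing tensor of order 3; let $L_{(N)ab}(q)$, $N=1,3,\dots,2\ell+1$, be symmetric tensors such that $L_{(N)(ab;c)}$ is a Killing tensor of order 3 for $N=1,3,\dots,2\ell-1$ and $L_{(2\ell+1)ab}$ is a Killing tensor of order 2; let $L_{(A)a}(q)$, $A=0,2,\dots,2\ell$, be covector fields satisfying $$L_{(0)(a;b)}=3L_{(0)abc}Q^{c}-L_{(1)ab},$$ $$L_{(k-1)(a;b)}=-\tfrac{3}{k-1}L_{(k-2)(ab;c)}Q^{c}-kL_{(k)ab},\quad k=3,5,\dots,2\ell+1,$$ $$\big(L_{(2\ell)c}Q^{c}\big)_{,a}=2(2\ell+1)L_{(2\ell+1)ab}Q^{b},$$ $$\big(L_{(k-2)c}Q^{c}\big)_{,a}=2(k-1)L_{(k-1)ab}Q^{b}-k(k-1)L_{(k)a},\quad k=2,4,\dots,2\ell.$$ Then $$J^{(3,2)}_{\ell}=\Big(L_{(0)abc}-\sum_{j=1}^{\ell}\tfrac{t^{2j}}{2j}L_{(2j-1)(ab;c)}\Big)\dot q^a\dot q^b\dot q^c+\Big(\sum_{j=0}^{\ell}t^{2j+1}L_{(2j+1)ab}\Big)\dot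 q^a\dot q^b+\Big(\sum_{j=0}^{\ell}t^{2j}L_{(2j)a}\Big)\dot q^a+\sum_{j=0}^{\ell}\tfrac{t^{2j+1}}{2j+1}L_{(2j)c}Q^c$$ is a first integral. (CFI 3) Let $\lambda\neq0$ be a constant, $L_{ab}(q)$ a symmetric tensor such that $L_{(ab;c)}$ is a Killing tensor of order 3, and $L_a(q)$ a covector field satisfying $$L_{(a;b)}=-\tfrac{3}{\lambda}L_{(ab;c)}Q^{c}-\lambda L_{ab},\qquad (L_cQ^c)_{,a}=2\lambda L_{ab}Q^b-\lambda^2L_a.$$ Then $$I^{(3)}_{e}=e^{\lambda t}\big(-L_{(ab;c)}\dot q^a\dot q^b\dot q^c+\lambda L_{ab}\dot q^a\dot q^b+\lambda L_a\dot q^a+L_aQ^a\big)$$ is a first integral.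
   Context: Einstein summation convention is used; a comma denotes a partial derivative, a semicolon denotes the covariant derivative of the Levi-Civita connection of $\gamma$, and round brackets around indices denote symmetrization (with weight $1/m!$). A Killing tensor of order $m$ is a totally symmetric covariant tensor $C_{a_1\dots a_m}$ with $C_{(a_1\dots a_m;b)}=0$. A first integral is a function of $(t,q,\dot q)$ whose total time derivative vanishes along every solution of the system. *)

From HB Require Import structures.
From mathcomp Require Import all_boot all_order all_algebra all_fingroup.
From mathcomp Require Import all_classical all_reals all_analysis.
Set Implicit Arguments. Unset Strict Implicit. Unset Printing Implicit Defensive.
Import Order.TTheory GRing.Theory Num.Theory.
Import numFieldNormedType.Exports.
Local Open Scope ring_scope.
Local Open Scope classical_set_scope.

Section Defs.
Variable R : realType.
Variable n : nat.
Local Notation pt := 'rV[R]_n.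

Definition ecoord (i : 'I_n) : pt := delta_mx 0 i.
Definition pd (i : 'I_n) (f : pt -> R) : pt -> R := fun x => derive f x (ecoord i).
Definition iter_pd (s : seq 'I_n) (f : pt -> R) : pt -> R := foldr pd f s.

Definition smooth_on (U : set pt) (f : pt -> R) : Prop :=
  forall (s : seq 'I_n) (x : pt), U x -> differentiable (iter_pd s f) x.

Definition metric_on (U : set pt) (g : pt -> 'M[R]_n) : Prop :=
  (forall i j, smooth_on U (fun x => g x i j)) /\
  (forall x, U x -> (g x)^T = g x /\ g x \in unitmx).

Definition christoffel (g : pt -> 'M[R]_n) (a b c : 'I_n) (x : pt) : R :=
  2^-1 * \sum_(d < n) (invmx (g x)) a d *
    (pd b (fun y => g y d c) x + pd c (fun y => g y d b) x - pd d (fun y => g y b c) x).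

Definition tfield (m : nat) := {ffun 'I_m -> 'I_n} -> pt -> R.

Definition tinit m (idx : {ffun 'I_m.+1 -> 'I_n}) : {ffun 'I_m -> 'I_n} :=
  [ffun i => idx (widen_ord (leqnSn m) i)].
Definition tlast m (idx : {ffun 'I_m.+1 -> 'I_n}) : 'I_n := idx ord_max.
Definition tset m (idx : {ffun 'I_m -> 'I_n}) (k : 'I_m) (c : 'I_n) : {ffun 'I_m -> 'I_n} :=
  [ffun i => if i == k then c else idx i].
Definition tperm m (idx : {ffun 'I_m -> 'I_n}) (s : 'S_m) : {ffun 'I_m -> 'I_n} :=
  [ffun i => idx (s i)].

(* covariant derivative: T_{a_1..a_m;b} (the derivative index b is the last one) *)
Definition covd (g : pt -> 'M[R]_n) m (T : tfield m) : tfield m.+1 := fun idx x =>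
  pd (tlast idx) (T (tinit idx)) x
  - \sum_(k < m) \sum_(c < n)
      christoffel g c (tlast idx) (tinit idx k) x * T (tset (tinit idx) k c) x.

Definition symz m (T : tfield m) : tfield m := fun idx x =>
  (m`!%:R)^-1 * \sum_(s : 'S_m) T (tperm idx s) x.

Definition symcov (g : pt -> 'M[R]_n) m (T : tfield m) : tfield m.+1 := symz (covd g T).

Definition tsymmetric (U : set pt) m (T : tfield m) : Prop :=
  forall idx (s : 'S_m) x, U x -> T (tperm idx s) x = T idx x.
Definition tsmooth (U : set pt) m (T : tfield m) : Prop := forall idx, smooth_on U (T idx).

Definition killing (g : pt -> 'M[R]_n) (U : set pt) m (C : tfield m) : Prop :=
  tsymmetric U C /\ forall idx x, U x -> symz (covd g C) idx x = 0.

Definition contr m (T : tfield m) (x : pt) (v : pt) : R :=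
  \sum_(idx : {ffun 'I_m -> 'I_n}) T idx x * \prod_(i < m) v 0 (idx i).

Definition ix1 (a : 'I_n) : {ffun 'I_1 -> 'I_n} := [ffun _ => a].
Definition ix2 (a b : 'I_n) : {ffun 'I_2 -> 'I_n} :=
  [ffun i => if val i == 0%N then a else b].
Definition ix3 (a b c : 'I_n) : {ffun 'I_3 -> 'I_n} :=
  [ffun i => if val i == 0%N then a else if val i == 1%N then b else c].

Definition c1 (T : tfield 1) (Q : pt -> pt) : pt -> R := fun x =>
  \sum_(c < n) T (ix1 c) x * Q x 0 c.
Definition c2 (T : tfield 2) (a : 'I_n) (Q : pt -> pt) : pt -> R := fun x =>
  \sum_(b < n) T (ix2 a b) x * Q x 0 b.
Definition c3 (T : tfield 3) (a b : 'I_n) (Q : pt -> pt) : pt -> R := fun x =>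
  \sum_(c < n) T (ix3 a b c) x * Q x 0 c.

Definition is_solution (g : pt -> 'M[R]_n) (Q : pt -> pt) (U : set pt)
    (I : set R) (q : R -> pt) : Prop :=
  open I /\ forall t, I t ->
    [/\ U (q t), derivable q t 1, derivable (derive1 q) t 1 &
      forall a : 'I_n, derive1 (derive1 q) t 0 a =
        - (\sum_(b < n) \sum_(c < n)
             christoffel g a b c (q t) * derive1 q t 0 b * derive1 q t 0 c)
        - Q (q t) 0 a].

Definition first_integral (g : pt -> 'M[R]_n) (Q : pt -> pt) (U : set pt)
    (J : R -> pt -> pt -> R) : Prop :=
  forall (I : set R) (q : R -> pt), is_solution g Q U I q -> forall t, I t ->
    derivable (fun s => J s (q s) (derive1 q s)) t 1 /\
    derive1 (fun s => J s (q s) (derive1 q s)) t = 0.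

End Defs.

(* Everything reduces to the time derivative, along a solution, of a contraction
   T(qdot,..,qdot) of a covariant tensor field T of order m: substituting the
   equations of motion turns it into  T_{(a_1..a_m;b)} qdot^{a_1}..qdot^b  minus
   the force term  m T_{a_1..a_m} Q^{a_m} qdot^{a_1}..qdot^{a_(m-1)}  (for symmetric T).

   (CFI 3) is then a direct computation.  For (CFI 1) and (CFI 2) the integral is
   regrouped into consecutive "blocks" built from a pair (L_(m)ab, L_(m+1)a); the
   hypotheses of the theorem say exactly that the derivative of each block is a
   difference F_m - F_(m+2) of "fluxes", while the first piece (the potential G,
   resp. the Killing tensor L_(0)abc) and the last one (the Killing tensor L_(2l)ab,
   resp. L_(2l+1)ab) contribute -F_start and F_end.  The derivative telescopes to 0. *)

From Pilot Require Import Defs.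
From HB Require Import structures.
From mathcomp Require Import all_boot all_order all_algebra all_fingroup.
From mathcomp Require Import all_classical all_reals all_analysis.
From mathcomp Require Import ring lra zify.
Import Order.TTheory GRing.Theory Num.Theory.
Import numFieldNormedType.Exports.
Local Open Scope ring_scope.
Local Open Scope classical_set_scope.
Set Implicit Arguments. Unset Strict Implicit. Unset Printing Implicit Defensive.

Lemma differentiable_near_eq (R : realType) (V W : normedModType R) (f g : V -> W) (x : V) :
  (\forall y \near x, f y = g y) -> differentiable g x -> differentiable f x.
Proof.
move=> fg dg.
have fxgx : f x = g x := nbhs_singleton fg.
have expansion : f \o shift x = cst (f x) + 'd g x +o_ 0 id.
  apply/eqaddoP => eps eps0.
  have /eqaddoP := diff_locally dg => /(_ eps eps0) Hg.
  move/nbhs0P : fg => fg0.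
  near=> h.
  have fgh : f (x + h) = g (x + h) by near: h.
  rewrite !fctE /= fxgx [h + x]addrC fgh addrC.
  have : `|((g \o shift x) - (cst (g x) + 'd g x)) h| <= eps * `|id h| by near: h.
  by rewrite !fctE /= [h + x]addrC addrC.
have dfe : 'd f x = 'd g x :> (V -> W).
  by apply: diff_unique => //; exact: diff_continuous.
by apply/diff_locallyP; rewrite dfe; split => //; exact: diff_continuous.
Unshelve. all: by end_near. Qed.

Section RealCalculus.
Context (R : realType).

Lemma is_derive_addf (f h : R -> R) t df dh :
  is_derive t (1:R) f df -> is_derive t (1:R) h dh ->
  is_derive t (1:R) (fun s => f s + h s) (df + dh).
Proof. by move=> Hf Hh; have := is_deriveD Hf Hh. Qed.

Lemma is_derive_subf (f h : R -> R) t df dh :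
  is_derive t (1:R) f df -> is_derive t (1:R) h dh ->
  is_derive t (1:R) (fun s => f s - h s) (df - dh).
Proof. by move=> Hf Hh; have := is_deriveB Hf Hh. Qed.

Lemma is_derive_mulf (f h : R -> R) t df dh :
  is_derive t (1:R) f df -> is_derive t (1:R) h dh ->
  is_derive t (1:R) (fun s => f s * h s) (f t * dh + h t * df).
Proof. by move=> Hf Hh; have := is_deriveM Hf Hh. Qed.

Lemma is_derive_oppf (f : R -> R) t df :
  is_derive t (1:R) f df -> is_derive t (1:R) (fun s => - f s) (- df).
Proof. by move=> Hf; have := is_deriveN Hf. Qed.

Lemma is_derive_scalef (c : R) (f : R -> R) t df :
  is_derive t (1:R) f df -> is_derive t (1:R) (fun s => c * f s) (c * df).
Proof. by move=> Hf; have := is_deriveZ c Hf. Qed.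

Lemma is_derive_sum (I : finType) (h : I -> R -> R) (dh : I -> R) t :
  (forall i, is_derive t (1:R) (h i) (dh i)) ->
  is_derive t (1:R) (fun s => \sum_i h i s) (\sum_i dh i).
Proof.
move=> H; rewrite -fct_sumE.
by elim/big_ind2 : _ => // [|] *; [exact: is_derive_cst|exact: is_deriveD].
Qed.

Lemma prod_but_last m (G : 'I_m.+1 -> R) :
  \prod_(i < m.+1 | i != ord_max) G i = \prod_(i < m) G (widen_ord (leqnSn m) i).
Proof.
rewrite big_mkcond big_ord_recr /= eqxx mulr1; apply: eq_bigr => i _.
rewrite ifT //.
by apply/eqP => /(congr1 val) /= E; move: (ltn_ord i); rewrite E ltnn.
Qed.

Lemma prod_but_widen m (G : 'I_m.+1 -> R) (k : 'I_m) :
  \prod_(i < m.+1 | i != widen_ord (leqnSn m) k) G i =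
  (\prod_(i < m | i != k) G (widen_ord (leqnSn m) i)) * G ord_max.
Proof.
rewrite big_mkcond big_ord_recr /= ifT; last first.
  by apply/eqP => /(congr1 val) /= E; move: (ltn_ord k); rewrite -E ltnn.
by congr (_ * _); rewrite [RHS]big_mkcond; apply: eq_bigr.
Qed.

Lemma is_derive_prod m (F : 'I_m -> R -> R) (dF : 'I_m -> R) t :
  (forall i, is_derive t (1:R) (F i) (dF i)) ->
  is_derive t (1:R) (fun s => \prod_(i < m) F i s)
    (\sum_(k < m) dF k * \prod_(i < m | i != k) F i t).
Proof.
elim: m F dF => [|m IH] F dF HF.
  rewrite big_ord0.
  have -> : (fun s => \prod_(i < 0) F i s) = cst 1.
    by apply/funext => s; rewrite big_ord0.
  exact: is_derive_cst.
have -> : (fun s => \prod_(i < m.+1) F i s) =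
    (fun s => \prod_(i < m) F (widen_ord (leqnSn m) i) s * F ord_max s).
  by apply/funext => s; rewrite big_ord_recr.
have := is_derive_mulf (IH _ _ (fun i => HF (widen_ord (leqnSn m) i))) (HF ord_max).
move=> D; apply: is_derive_eq D _.
rewrite [RHS]big_ord_recr /= prod_but_last addrC mulrC mulr_sumr; congr (_ + _).
by apply: eq_bigr => k _; rewrite prod_but_widen; ring.
Qed.

Lemma is_derive_monomial_mul (e : nat) (c : R) (F : R -> R) t dF :
  is_derive t (1:R) F dF ->
  is_derive t (1:R) (fun s => s ^+ e * c * F s)
    (e%:R * t ^+ e.-1 * c * F t + t ^+ e * c * dF).
Proof.
move=> HF.
have Dpow : is_derive t (1:R) (fun s : R => s ^+ e) (e%:R * t ^+ e.-1).
  have -> : (fun s : R => s ^+ e) = id ^+ e by apply/funext => s; rewrite exprfctE.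
  by apply: is_derive_eq (is_deriveX e (is_derive_id t (1:R))) _; rewrite /GRing.scale /= mulr1.
have Dmon : is_derive t (1:R) (fun s => s ^+ e * c) (e%:R * t ^+ e.-1 * c).
  by apply: is_derive_eq (is_derive_mulf Dpow (is_derive_cst c t 1)) _; rewrite mulr0 add0r mulrC.
by apply: is_derive_eq (is_derive_mulf Dmon HF) _; ring.
Qed.

Lemma is_derive_expR_scale (lam t : R) :
  is_derive t (1:R) (fun s => expR (lam * s)) (expR (lam * t) * lam).
Proof.
have Dlin : is_derive t (1:R) (fun s => lam * s) lam.
  by apply: is_derive_eq (is_deriveZ lam (is_derive_id t (1:R))) _; rewrite /GRing.scale /= mulr1.
have dlin : differentiable (fun s => lam * s) t by apply/derivable1_diffP.
have dexp : differentiable expR (lam * t) by apply/derivable1_diffP.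
apply: DeriveDef; first by apply/derivable1_diffP; exact: differentiable_comp.
rewrite -derive1E -[fun s => expR (lam * s)]/(expR \o (fun s => lam * s)).
rewrite derive1_comp //.
by rewrite !derive1E !derive_val.
Qed.

Lemma is_derive_monomial (e : nat) (F : R -> R) t dF :
  is_derive t (1:R) F dF ->
  is_derive t (1:R) (fun s => s ^+ e * F s) (e%:R * t ^+ e.-1 * F t + t ^+ e * dF).
Proof.
move=> HF; have := is_derive_monomial_mul e 1 HF; rewrite !mulr1.
by under eq_fun do rewrite mulr1.
Qed.

Lemma is_derive_telescope N (base : R -> R) (blk : nat -> R -> R) (top : R -> R)
    (E : nat -> R) t :
  is_derive t (1:R) base (- E 0%N) ->
  (forall j, (j < N)%N -> is_derive t (1:R) (blk j) (E j - E j.+1)) ->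
  is_derive t (1:R) top (E N) ->
  is_derive t (1:R) (fun s => base s + \sum_(j < N) blk j s + top s) 0.
Proof.
move=> Dbase Dblk Dtop.
have Dsum := @is_derive_sum 'I_N (fun j => blk j) (fun j => E j - E j.+1) t
  (fun j => Dblk j (ltn_ord j)).
apply: is_derive_eq (is_derive_addf (is_derive_addf Dbase Dsum) Dtop) _.
have -> : \sum_(j < N) (E j - E j.+1) = - E N - - E 0%N.
  rewrite -(big_mkord xpredT (fun j => E j - E j.+1)).
  by apply: (@telescope_sumr_eq _ _ _ (fun k => - E k)) => // k _; rewrite opprK addrC.
by rewrite opprK; ring.
Qed.

End RealCalculus.

Section ChartCalculus.
Context (R : realType) (n : nat).
Local Notation pt := 'rV[R]_n.

Lemma row_coord_decomp (v : pt) : v = \sum_(b < n) v 0 b *: ecoord R b.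
Proof.
apply/rowP => j; rewrite summxE (bigD1 j) //= big1 => [|b bj].
  by rewrite !mxE !eqxx mulr1 addr0.
by rewrite !mxE eqxx /= eq_sym (negbTE bj) mulr0.
Qed.

Lemma is_derive_chart_comp (f : pt -> R) (q : R -> pt) t :
  differentiable f (q t) -> derivable q t 1 ->
  is_derive t 1 (f \o q) (\sum_(b < n) pd b f (q t) * derive1 q t 0 b).
Proof.
move=> df dq; have dq' : differentiable q t by apply/derivable1_diffP.
have dfq : differentiable (f \o q) t by apply: differentiable_comp.
apply: DeriveDef; first by apply/derivable1_diffP.
rewrite deriveE // diff_comp // /= -derive1E' //.
rewrite {1}(row_coord_decomp (derive1 q t)) linear_sum; apply: eq_bigr => b _.
by rewrite linearZ /= /pd deriveE // mulrC.
Qed.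

Lemma is_derive_coord (p : R -> pt) t (a : 'I_n) :
  derivable p t 1 -> is_derive t 1 (fun s => p s 0 a) (derive1 p t 0 a).
Proof.
move=> dp; have dpa : derivable (fun s => p s 0 a) t 1.
  by move/derivable_mxP : dp; apply.
by apply: DeriveDef => //; rewrite derive1E derive_mx // mxE.
Qed.

Lemma is_derive_contr_curve m (T : tfield R n m) (q : R -> pt) t :
  derivable q t 1 -> derivable (derive1 q) t 1 ->
  (forall idx, differentiable (T idx) (q t)) ->
  is_derive t 1 (fun s => contr T (q s) (derive1 q s))
   (\sum_idx ((\sum_(b < n) pd b (T idx) (q t) * derive1 q t 0 b) *
                \prod_(i < m) derive1 q t 0 (idx i)
     + T idx (q t) * \sum_(k < m) derive1 (derive1 q) t 0 (idx k) *
                \prod_(i < m | i != k) derive1 q t 0 (idx i))).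
Proof.
move=> dq ddq dT; apply: is_derive_sum => idx.
have Hprod := @is_derive_prod R m (fun i s => derive1 q s 0 (idx i)) _ t
  (fun i => is_derive_coord (idx i) ddq).
apply: is_derive_eq (is_derive_mulf (is_derive_chart_comp (dT idx) dq) Hprod) _.
by rewrite addrC mulrC.
Qed.

Definition ixsnoc m (idx : {ffun 'I_m -> 'I_n}) (b : 'I_n) : {ffun 'I_m.+1 -> 'I_n} :=
  [ffun i => if unlift ord_max i is Some j then idx j else b].

Lemma widen_lift_max m (i : 'I_m) : widen_ord (leqnSn m) i = lift ord_max i.
Proof. by apply: val_inj; rewrite /= /bump leqNgt ltn_ord add0n. Qed.

Lemma ixsnoc_lift m idx b (j : 'I_m) : ixsnoc idx b (lift ord_max j) = idx j.
Proof. by rewrite /ixsnoc ffunE liftK. Qed.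

Lemma ixsnoc_widen m idx b (i : 'I_m) : ixsnoc idx b (widen_ord (leqnSn m) i) = idx i.
Proof. by rewrite widen_lift_max ixsnoc_lift. Qed.

Lemma ixsnoc_max m idx b : ixsnoc idx b (@ord_max m) = b.
Proof. by rewrite /ixsnoc ffunE unlift_none. Qed.

Lemma tinit_ixsnoc m idx b : tinit (@ixsnoc m idx b) = idx.
Proof. by apply/ffunP => i; rewrite /tinit ffunE ixsnoc_widen. Qed.

Lemma tlast_ixsnoc m idx b : tlast (@ixsnoc m idx b) = b.
Proof. exact: ixsnoc_max. Qed.

Lemma ixsnoc_tinit m (f : {ffun 'I_m.+1 -> 'I_n}) : ixsnoc (tinit f) (tlast f) = f.
Proof.
apply/ffunP => i; rewrite /ixsnoc ffunE.
by case: unliftP => [j ->|-> //]; rewrite /tinit ffunE widen_lift_max.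
Qed.

Lemma sum_ixsnoc m (F : {ffun 'I_m.+1 -> 'I_n} -> R) :
  \sum_f F f = \sum_(idx : {ffun 'I_m -> 'I_n}) \sum_(b < n) F (ixsnoc idx b).
Proof.
rewrite pair_big /= (reindex (fun p : {ffun 'I_m -> 'I_n} * 'I_n => ixsnoc p.1 p.2)) //=.
exists (fun f => (tinit f, tlast f)) => [[idx b] _|f _] /=.
  by rewrite tinit_ixsnoc tlast_ixsnoc.
exact: ixsnoc_tinit.
Qed.

Lemma prod_ixsnoc m (v : pt) idx b :
  \prod_(i < m.+1) v 0 (@ixsnoc m idx b i) = (\prod_(i < m) v 0 (idx i)) * v 0 b.
Proof.
rewrite big_ord_recr /= ixsnoc_max; congr (_ * _); apply: eq_bigr => i _.
by rewrite ixsnoc_widen.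
Qed.

Lemma ixsnoc_ix0 (idx : {ffun 'I_0 -> 'I_n}) b : ixsnoc idx b = ix1 b.
Proof.
apply/ffunP => i; case: (unliftP ord_max i) => [j ->|->]; first by case: j.
by rewrite ixsnoc_max /ix1 ffunE.
Qed.

Lemma val_lift_max m (j : 'I_m) : val (lift ord_max j) = val j.
Proof. by rewrite /= /bump leqNgt ltn_ord add0n. Qed.

Lemma ixsnoc_ix1 a b : ixsnoc (ix1 a) b = ix2 a b.
Proof.
apply/ffunP => i; case: (unliftP ord_max i) => [j ->|->]; last by rewrite ixsnoc_max /ix2 ffunE.
rewrite ixsnoc_lift /ix1 /ix2 !ffunE val_lift_max.
by case: j => -[|j] Hj.
Qed.

Lemma ixsnoc_ix2 a b c : ixsnoc (ix2 a b) c = ix3 a b c.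
Proof.
apply/ffunP => i; case: (unliftP ord_max i) => [j ->|->]; last by rewrite ixsnoc_max /ix3 ffunE.
rewrite ixsnoc_lift /ix3 /ix2 !ffunE val_lift_max.
by case: j => -[|[|j]] Hj.
Qed.

Lemma sum_ix1 (F : {ffun 'I_1 -> 'I_n} -> R) : \sum_idx F idx = \sum_(a < n) F (ix1 a).
Proof.
rewrite sum_ixsnoc.
under eq_bigr do under eq_bigr do rewrite ixsnoc_ix0.
by rewrite sumr_const card_ffun !card_ord expn0 mulr1n.
Qed.

Lemma sum_ix2 (F : {ffun 'I_2 -> 'I_n} -> R) :
  \sum_idx F idx = \sum_(a < n) \sum_(b < n) F (ix2 a b).
Proof.
rewrite sum_ixsnoc sum_ix1; apply: eq_bigr => a _; apply: eq_bigr => b _.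
by rewrite ixsnoc_ix1.
Qed.

Lemma tset_at m (idx : {ffun 'I_m -> 'I_n}) k c : tset idx k c k = c.
Proof. by rewrite /tset ffunE eqxx. Qed.

Lemma tset_ne m (idx : {ffun 'I_m -> 'I_n}) k c i : i != k -> tset idx k c i = idx i.
Proof. by rewrite /tset ffunE => /negbTE ->. Qed.

Lemma tset_tset m (idx : {ffun 'I_m -> 'I_n}) k c : tset (tset idx k c) k (idx k) = idx.
Proof. by apply/ffunP => i; rewrite /tset !ffunE; case: eqP => [->|]; rewrite ?eqxx. Qed.

(* The swap (idx, c) |-> (idx[k := c], idx k) is an involution of the index pairs. *)
Lemma sum_tset m (k : 'I_m) (F : {ffun 'I_m -> 'I_n} -> 'I_n -> R) :
  \sum_idx \sum_(c < n) F idx c = \sum_idx \sum_(c < n) F (tset idx k c) (idx k).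
Proof.
rewrite !pair_big /=.
pose phi := fun p : {ffun 'I_m -> 'I_n} * 'I_n => (tset p.1 k p.2, p.1 k).
have phiK : involutive phi by move=> [idx c]; rewrite /phi /= tset_tset tset_at.
by rewrite (reindex_inj (inv_inj phiK)).
Qed.

Lemma prod_tset m (v : pt) (idx : {ffun 'I_m -> 'I_n}) k c :
  \prod_(i < m) v 0 (tset idx k c i) = v 0 c * \prod_(i < m | i != k) v 0 (idx i).
Proof.
rewrite (bigD1 k) //= tset_at; congr (_ * _); apply: eq_bigr => i ik.
by rewrite tset_ne.
Qed.

Lemma christoffel_contr_regroup m g (T : tfield R n m) (x v : pt) :
  \sum_(idx : {ffun 'I_m -> 'I_n}) \sum_(b < n)
      (\sum_(k < m) \sum_(c < n) christoffel g c b (idx k) x * T (tset idx k c) x)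
     * (\prod_(i < m) v 0 (idx i) * v 0 b)
  = \sum_(idx : {ffun 'I_m -> 'I_n}) T idx x * \sum_(k < m)
      (\sum_(b < n) \sum_(c < n) christoffel g (idx k) b c x * v 0 b * v 0 c)
     * \prod_(i < m | i != k) v 0 (idx i).
Proof.
have expandL : forall idx : {ffun 'I_m -> 'I_n}, \sum_(b < n)
    (\sum_(k < m) \sum_(c < n) christoffel g c b (idx k) x * T (tset idx k c) x)
     * (\prod_(i < m) v 0 (idx i) * v 0 b) =
   \sum_(k < m) \sum_(c < n) \sum_(b < n) christoffel g c b (idx k) x * T (tset idx k c) x
     * (\prod_(i < m) v 0 (idx i) * v 0 b).
  move=> idx; under eq_bigr do rewrite big_distrl /=.
  rewrite exchange_big /=; apply: eq_bigr => k _.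
  by under eq_bigr do rewrite big_distrl /=; rewrite exchange_big.
have expandR : forall idx : {ffun 'I_m -> 'I_n}, T idx x * \sum_(k < m)
    (\sum_(b < n) \sum_(c < n) christoffel g (idx k) b c x * v 0 b * v 0 c)
     * \prod_(i < m | i != k) v 0 (idx i) =
   \sum_(k < m) \sum_(c < n) \sum_(b < n) T idx x * (christoffel g (idx k) b c x
     * v 0 b * v 0 c * \prod_(i < m | i != k) v 0 (idx i)).
  move=> idx; rewrite big_distrr /=; apply: eq_bigr => k _.
  rewrite big_distrl /= big_distrr /= exchange_big /=; apply: eq_bigr => c _.
  by rewrite big_distrl /= big_distrr.
under eq_bigr do rewrite expandL.
under [RHS]eq_bigr do rewrite expandR.
rewrite exchange_big [RHS]exchange_big /=; apply: eq_bigr => k _.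
rewrite (sum_tset k); apply: eq_bigr => idx _; apply: eq_bigr => c _.
apply: eq_bigr => b _; rewrite tset_at tset_tset prod_tset; ring.
Qed.

(* The force term T_{a_1..a_m} sum_k w^{a_k} prod_{i<>k} v^{a_i}: the contribution of
   an acceleration w to the time derivative of T(v,..,v). *)
Definition contr_force m (T : tfield R n m) (x v w : pt) : R :=
  \sum_(idx : {ffun 'I_m -> 'I_n}) T idx x *
     \sum_(k < m) w 0 (idx k) * \prod_(i < m | i != k) v 0 (idx i).

Lemma contr_derivative_geodesic_form m g (T : tfield R n m) (x v acc Qx : pt) :
  (forall a, acc 0 a =
     - (\sum_(b < n) \sum_(c < n) christoffel g a b c x * v 0 b * v 0 c) - Qx 0 a) ->
  \sum_(idx : {ffun 'I_m -> 'I_n})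
     ((\sum_(b < n) pd b (T idx) x * v 0 b) * \prod_(i < m) v 0 (idx i)
     + T idx x * \sum_(k < m) acc 0 (idx k) * \prod_(i < m | i != k) v 0 (idx i))
  = contr (covd g T) x v - contr_force T x v Qx.
Proof.
move=> Hacc.
rewrite /contr sum_ixsnoc /contr_force.
under [X in X - _]eq_bigr => idx _.
  under eq_bigr => b _ do rewrite prod_ixsnoc /covd tinit_ixsnoc tlast_ixsnoc mulrBl.
  rewrite sumrB.
  over.
rewrite sumrB christoffel_contr_regroup -!sumrB; apply: eq_bigr => idx _.
under [X in T idx x * X]eq_bigr => k _ do rewrite Hacc mulrBl mulNr.
rewrite sumrB sumrN mulrBr mulrN big_distrl /=.
set A := \sum_(b < n) _; set B := \sum_(b < n) _.
have -> : A = B by apply: eq_bigr => b _; rewrite /= mulrCA mulrC mulrA.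
ring.
Qed.

Lemma tperm_invK m (idx : {ffun 'I_m -> 'I_n}) (s : 'S_m) :
  Defs.tperm (Defs.tperm idx (s^-1)%g) s = idx.
Proof. by apply/ffunP => i; rewrite /Defs.tperm !ffunE permK. Qed.

Lemma contr_symz m (T : tfield R n m) x v : contr (symz T) x v = contr T x v.
Proof.
rewrite /contr /symz.
under eq_bigr do rewrite -mulrA big_distrl /=.
rewrite -big_distrr /= exchange_big /=.
have perm_invariant : forall s : 'S_m,
  \sum_(idx : {ffun 'I_m -> 'I_n}) T (Defs.tperm idx s) x * \prod_(i < m) v 0 (idx i)
   = \sum_(idx : {ffun 'I_m -> 'I_n}) T idx x * \prod_(i < m) v 0 (idx i).
  move=> s.
  have permK' : cancel (fun idx : {ffun 'I_m -> 'I_n} => Defs.tperm idx (s^-1)%g)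
                       (fun idx => Defs.tperm idx s) by move=> idx; exact: tperm_invK.
  rewrite (reindex_inj (can_inj permK')) /=.
  apply: eq_bigr => idx _; rewrite tperm_invK; congr (_ * _).
  rewrite [RHS](reindex_inj (@perm_inj _ (s^-1)%g)) /=.
  by apply: eq_bigr => i _; rewrite /Defs.tperm ffunE.
under eq_bigr do rewrite perm_invariant.
rewrite sumr_const card_Sn -mulr_natl.
have : (m`!%:R : R) != 0 by rewrite pnatr_eq0 -lt0n fact_gt0.
by move=> ?; field.
Qed.

(* For a symmetric tensor every slot contributes equally to the force term. *)
Lemma contr_force_sym m (T : tfield R n m.+1) x v w :
  (forall idx s, T (Defs.tperm idx s) x = T idx x) ->
  contr_force T x v w = m.+1%:R * \sum_(idx : {ffun 'I_m -> 'I_n}) \sum_(c < n)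
      T (ixsnoc idx c) x * w 0 c * \prod_(i < m) v 0 (idx i).
Proof.
move=> Tsym; rewrite /contr_force.
under eq_bigr do rewrite big_distrr /=.
rewrite exchange_big /=.
have slot_max : forall k : 'I_m.+1,
  \sum_(idx : {ffun 'I_m.+1 -> 'I_n})
      T idx x * (w 0 (idx k) * \prod_(i < m.+1 | i != k) v 0 (idx i)) =
  \sum_(idx : {ffun 'I_m.+1 -> 'I_n})
      T idx x * (w 0 (idx ord_max) * \prod_(i < m.+1 | i != ord_max) v 0 (idx i)).
  move=> k; pose s := tperm k (@ord_max m).
  have sK : cancel (fun idx : {ffun 'I_m.+1 -> 'I_n} => Defs.tperm idx s)
                   (fun idx => Defs.tperm idx s).
    by move=> idx; apply/ffunP => i; rewrite /Defs.tperm !ffunE tpermK.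
  rewrite (reindex_inj (can_inj sK)) /=.
  apply: eq_bigr => idx _; rewrite Tsym; congr (_ * (_ * _)).
    by rewrite /Defs.tperm ffunE /s tpermL.
  rewrite [RHS](reindex_inj (@perm_inj _ s)) /=.
  apply: eq_big => [i|i _]; last by rewrite /Defs.tperm ffunE.
  by rewrite -{1}(tpermL k (@ord_max m)) -/s (inj_eq (@perm_inj _ s)).
under eq_bigr do rewrite slot_max.
rewrite sumr_const card_ord -[X in X = _]mulr_natl; congr (_ * _).
rewrite sum_ixsnoc; apply: eq_bigr => idx _; apply: eq_bigr => c _.
rewrite ixsnoc_max prod_but_last mulrA; congr (_ * _); apply: eq_bigr => i _.
by rewrite ixsnoc_widen.
Qed.

Lemma contr_ix1 (T : tfield R n 1) x (v : pt) :
  contr T x v = \sum_(a < n) T (ix1 a) x * v 0 a.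
Proof. by rewrite /contr sum_ix1; apply: eq_bigr => a _; rewrite big_ord1 /ix1 ffunE. Qed.

Lemma contr_ix2 (T : tfield R n 2) x (v : pt) :
  contr T x v = \sum_(a < n) \sum_(b < n) T (ix2 a b) x * (v 0 a * v 0 b).
Proof.
rewrite /contr sum_ix2; apply: eq_bigr => a _; apply: eq_bigr => b _.
by rewrite !big_ord_recr big_ord0 /= mul1r /ix2 !ffunE.
Qed.

Lemma contr_force1 (T : tfield R n 1) x v w :
  contr_force T x v w = \sum_(a < n) T (ix1 a) x * w 0 a.
Proof.
rewrite contr_force_sym; last first.
  move=> idx s; have -> : s = 1%g by apply/permP => i; rewrite perm1 !ord1.
  by congr (T _ x); apply/ffunP => i; rewrite /Defs.tperm ffunE perm1.
rewrite mul1r.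
under eq_bigr do under eq_bigr do rewrite ixsnoc_ix0 big_ord0 mulr1.
by rewrite sumr_const card_ffun !card_ord expn0 mulr1n.
Qed.

Lemma contr_force2 (T : tfield R n 2) x v w :
  (forall idx s, T (Defs.tperm idx s) x = T idx x) ->
  contr_force T x v w = 2 * \sum_(a < n) (\sum_(c < n) T (ix2 a c) x * w 0 c) * v 0 a.
Proof.
move=> Ts; rewrite contr_force_sym // sum_ix1; congr (_ * _); apply: eq_bigr => a _.
rewrite big_distrl /=; apply: eq_bigr => c _.
by rewrite ixsnoc_ix1 big_ord1 /ix1 ffunE.
Qed.

Lemma contr_force3 (T : tfield R n 3) x v w :
  (forall idx s, T (Defs.tperm idx s) x = T idx x) ->
  contr_force T x v w = 3 * \sum_(a < n) \sum_(b < n)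
     (\sum_(c < n) T (ix3 a b c) x * w 0 c) * (v 0 a * v 0 b).
Proof.
move=> Ts; rewrite contr_force_sym // sum_ix2; congr (_ * _); apply: eq_bigr => a _.
apply: eq_bigr => b _; rewrite big_distrl /=; apply: eq_bigr => c _.
by rewrite ixsnoc_ix2 !big_ord_recr big_ord0 /= mul1r /ix2 !ffunE.
Qed.

Lemma killing_symcov_contr0 g (U : set pt) m (C : tfield R n m) x v :
  killing g U C -> U x -> contr (symcov g C) x v = 0.
Proof. by move=> [_ kC] Ux; rewrite /contr big1 // => idx _; rewrite /symcov kC // mul0r. Qed.

Lemma differentiable_sum (I : finType) (F : I -> pt -> R) x :
  (forall i, differentiable (F i) x) -> differentiable (fun y => \sum_i F i y) x.
Proof.
move=> H; rewrite -fct_sumE.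
by elim/big_ind : _ => [|f1 f2 d1 d2|i _];
  [exact: differentiable_cst|exact: differentiableD|exact: H].
Qed.

Lemma differentiable_prod (I : finType) (F : I -> pt -> R) x :
  (forall i, differentiable (F i) x) -> differentiable (fun y => \prod_i F i y) x.
Proof.
move=> H; rewrite -fct_prodE.
by elim/big_ind : _ => [|f1 f2 d1 d2|i _];
  [exact: differentiable_cst|exact: differentiableM|exact: H].
Qed.

Lemma differentiable_mulf (f h : pt -> R) x :
  differentiable f x -> differentiable h x -> differentiable (fun y => f y * h y) x.
Proof. exact: differentiableM. Qed.

Lemma differentiable_det k (M : pt -> 'M[R]_k) x :
  (forall i j, differentiable (fun y => M y i j) x) ->
  differentiable (fun y => \det (M y)) x.
Proof.
move=> H; apply: differentiable_sum => s.
apply: differentiable_mulf; first exact: differentiable_cst.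
by apply: differentiable_prod => i; exact: H.
Qed.

Lemma differentiable_adj k (M : pt -> 'M[R]_k) x i j :
  (forall i j, differentiable (fun y => M y i j) x) ->
  differentiable (fun y => \adj (M y) i j) x.
Proof.
move=> H; under eq_fun do rewrite mxE /cofactor.
apply: differentiable_mulf; first exact: differentiable_cst.
by apply: differentiable_det => i' j'; under eq_fun do rewrite !mxE; exact: H.
Qed.

Lemma smooth_differentiable (U : set pt) f x : smooth_on U f -> U x -> differentiable f x.
Proof. by move=> H Ux; exact: (H [::] x Ux). Qed.

Lemma smooth_pd_differentiable (U : set pt) f b x :
  smooth_on U f -> U x -> differentiable (pd b f) x.
Proof. by move=> H Ux; exact: (H [:: b] x Ux). Qed.

(* On the open set U the inverse metric is the adjugate over the (nonvanishing)
   determinant, so the Christoffel symbols are differentiable there. *)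
Lemma christoffel_differentiable (U : set pt) g a b c x :
  open U -> metric_on U g -> U x -> differentiable (christoffel g a b c) x.
Proof.
move=> oU [gs gu] Ux.
pose h := fun y => 2^-1 * \sum_(d < n) ((\det (g y))^-1 * \adj (g y) a d) *
    (pd b (fun z => g z d c) y + pd c (fun z => g z d b) y - pd d (fun z => g z b c) y).
apply: (@differentiable_near_eq _ _ _ _ h).
  have : \forall y \near x, U y by apply: open_nbhs_nbhs; split.
  apply: filterS => y Uy; rewrite /christoffel /h /invmx.
  have [_ ->] := gu y Uy.
  by congr (_ * _); apply: eq_bigr => d _; rewrite mxE.
have dg i j : differentiable (fun y => g y i j) x by apply: smooth_differentiable (gs i j) Ux.
apply: differentiable_mulf; first exact: differentiable_cst.
apply: differentiable_sum => d; apply: differentiable_mulf.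
  apply: differentiable_mulf; last exact: differentiable_adj.
  apply: differentiableV; first exact: differentiable_det.
  by have [_] := gu x Ux; rewrite unitmxE unitfE.
by apply: differentiableB; [apply: differentiableD|]; apply: smooth_pd_differentiable.
Qed.

Lemma symcov_differentiable g (U : set pt) m (T : tfield R n m) idx x :
  open U -> metric_on U g -> tsmooth U T -> U x -> differentiable (symcov g T idx) x.
Proof.
move=> oU mg sT Ux; apply: differentiable_mulf; first exact: differentiable_cst.
apply: differentiable_sum => s; apply: differentiableB.
  exact: smooth_pd_differentiable (sT _) Ux.
apply: differentiable_sum => k; apply: differentiable_sum => c.
apply: differentiable_mulf; first exact: (christoffel_differentiable _ _ _ oU mg Ux).
exact: smooth_differentiable (sT _) Ux.
Qed.

End ChartCalculus.

Section Motion.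
Context (R : realType) (n : nat).
Local Notation pt := 'rV[R]_n.
Context (U : set pt) (g : pt -> 'M[R]_n) (Q : pt -> pt).

Definition force2 (A : tfield R n 2) (x v : pt) : R :=
  \sum_(a < n) c2 A a Q x * v 0 a.
Definition force3 (C : tfield R n 3) (x v : pt) : R :=
  \sum_(a < n) \sum_(b < n) c3 C a b Q x * (v 0 a * v 0 b).

Lemma contr_relation2 (C : tfield R n 3) (L W : tfield R n 2) x (v : pt) al be :
  (forall a b, W (ix2 a b) x = al * c3 C a b Q x - be * L (ix2 a b) x) ->
  contr W x v = al * force3 C x v - be * contr L x v.
Proof.
move=> H; rewrite !contr_ix2 /force3 !big_distrr -sumrB; apply: eq_bigr => a _.
rewrite !big_distrr -sumrB; apply: eq_bigr => b _ /=; rewrite H; ring.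
Qed.

Lemma contr_relation1 (f : pt -> R) (A : tfield R n 2) (B : tfield R n 1) x (v : pt) al be :
  (forall a, pd a f x = al * c2 A a Q x - be * B (ix1 a) x) ->
  \sum_(a < n) pd a f x * v 0 a = al * force2 A x v - be * contr B x v.
Proof.
move=> H; rewrite contr_ix1 /force2 !big_distrr -sumrB; apply: eq_bigr => a _ /=.
rewrite H; ring.
Qed.

Lemma c1_differentiable (L : tfield R n 1) x :
  tsmooth U L -> (forall a, smooth_on U (fun x => Q x 0 a)) -> U x ->
  differentiable (c1 L Q) x.
Proof.
move=> sL sQ Ux; apply: differentiable_sum => c; apply: differentiable_mulf.
  exact: smooth_differentiable (sL _) Ux.
exact: smooth_differentiable (sQ c) Ux.
Qed.

Lemma first_integral_of_is_derive (J : R -> pt -> pt -> R) :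
  (forall I q t, is_solution g Q U I q -> I t ->
     is_derive t 1 (fun s => J s (q s) (derive1 q s)) 0) ->
  first_integral g Q U J.
Proof.
move=> H I q sol t It; have D := H I q t sol It.
by split; [exact: ex_derive | rewrite derive1E derive_val].
Qed.

Section AlongSolution.
Context (I : set R) (q : R -> pt) (t : R).
Hypotheses (sol : is_solution g Q U I q) (It : I t).
Local Notation x := (q t).
Local Notation v := (derive1 q t).

Lemma solution_in_domain : U x.
Proof. by case: sol => _ /(_ t It) []. Qed.

Lemma is_derive_scalar (f : pt -> R) :
  differentiable f x ->
  is_derive t 1 (fun s => f (q s)) (\sum_(a < n) pd a f x * v 0 a).
Proof. by move=> df; case: sol => _ /(_ t It) [_ dq _ _]; have := is_derive_chart_comp df dq. Qed.

Lemma is_derive_contr m (T : tfield R n m) :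
  (forall idx, differentiable (T idx) x) ->
  is_derive t 1 (fun s => contr T (q s) (derive1 q s))
    (contr (covd g T) x v - contr_force T x v (Q x)).
Proof.
case: sol => _ /(_ t It) [_ dq ddq acc] dT.
apply: is_derive_eq (is_derive_contr_curve dq ddq dT) _.
exact: contr_derivative_geodesic_form.
Qed.

Lemma is_derive_linear (L : tfield R n 1) :
  tsmooth U L ->
  is_derive t 1 (fun s => contr L (q s) (derive1 q s))
    (contr (symcov g L) x v - c1 L Q x).
Proof.
move=> sL; have Uq := solution_in_domain.
apply: is_derive_eq (is_derive_contr (fun idx => smooth_differentiable (sL idx) Uq)) _.
by rewrite /symcov contr_symz contr_force1.
Qed.

Lemma is_derive_quadratic (A : tfield R n 2) :
  tsmooth U A -> tsymmetric U A ->
  is_derive t 1 (fun s => contr A (q s) (derive1 q s))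
    (contr (symcov g A) x v - 2 * force2 A x v).
Proof.
move=> sA syA; have Uq := solution_in_domain.
apply: is_derive_eq (is_derive_contr (fun idx => smooth_differentiable (sA idx) Uq)) _.
by rewrite /symcov contr_symz contr_force2 // => idx s; apply: syA.
Qed.

Lemma is_derive_killing3 (C : tfield R n 3) :
  killing g U C -> (forall idx, differentiable (C idx) x) ->
  is_derive t 1 (fun s => contr C (q s) (derive1 q s)) (- (3 * force3 C x v)).
Proof.
move=> kC dC; have Uq := solution_in_domain.
apply: is_derive_eq (is_derive_contr dC) _.
rewrite -contr_symz -/(symcov g C) (killing_symcov_contr0 _ kC Uq) sub0r contr_force3 //.
by move=> idx s; case: kC => syC _; apply: syC.
Qed.

End AlongSolution.
End Motion.

Section FirstIntegrals.
Context (R : realType) (n : nat).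
Local Notation pt := 'rV[R]_n.
Context (U : set pt) (g : pt -> 'M[R]_n) (Q : pt -> pt).
Hypotheses (oU : open U) (mg : metric_on U g) (sQ : forall a, smooth_on U (fun x => Q x 0 a)).

Lemma cfi3 (lam : R) (L2 : tfield R n 2) (L1 : tfield R n 1) :
  lam != 0 ->
  tsmooth U L2 -> tsymmetric U L2 -> tsmooth U L1 ->
  killing g U (symcov g L2) ->
  (forall a b x, U x ->
     symcov g L1 (ix2 a b) x =
       - (3 / lam) * c3 (symcov g L2) a b Q x - lam * L2 (ix2 a b) x) ->
  (forall a x, U x ->
     pd a (c1 L1 Q) x = 2 * lam * c2 L2 a Q x - lam ^+ 2 * L1 (ix1 a) x) ->
  first_integral g Q U (fun t x v =>
      expR (lam * t) *
        (- contr (symcov g L2) x v + lam * contr L2 x v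
         + lam * contr L1 x v + c1 L1 Q x)).
Proof.
move=> lam0 sL2 syL2 sL1 kC hL1 hgrad.
apply: first_integral_of_is_derive => I q t sol It.
have Uq := solution_in_domain sol It.
have Dcubic := is_derive_killing3 sol It kC (fun idx => symcov_differentiable idx oU mg sL2 Uq).
have Dquad := is_derive_scalef lam (is_derive_quadratic sol It sL2 syL2).
have Dlin := is_derive_scalef lam (is_derive_linear sol It sL1).
have Dpot := is_derive_scalar sol It (c1_differentiable sL1 sQ Uq).
have := is_derive_mulf (is_derive_expR_scale lam t)
  (is_derive_addf (is_derive_addf (is_derive_addf (is_derive_oppf Dcubic) Dquad) Dlin) Dpot).
move=> D; apply: is_derive_eq D _.
rewrite (@contr_relation2 _ _ Q (symcov g L2) L2 (symcov g L1) _ _ (- (3 / lam)) lam);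
  last by move=> a b; rewrite hL1.
rewrite (@contr_relation1 _ _ Q _ L2 L1 _ _ (2 * lam) (lam ^+ 2)); last by move=> a; rewrite hgrad.
by field.
Qed.


(* The polynomial first integrals (CFI 1) and (CFI 2) are sums of "blocks"
     B_m = t^m A(v,v) + t^(m+1) B(v) - t^(m+1)/(m+1) A_{(ab;c)} v^a v^b v^c
           + t^(m+2)/(m+2) B_c Q^c,
   one for each consecutive pair (A, B) = (L_(m), L_(m+1)), whose time derivative is
   the difference F_m - F_(m+2) of the fluxes
     F_m = m t^(m-1) A(v,v) - 2 t^m A_{ab} Q^b v^a + (m+1) t^m B(v). *)
Definition chain_block (m : nat) (A : tfield R n 2) (B : tfield R n 1) (s : R) (x v : pt) : R :=
  s ^+ m * contr A x v + s ^+ m.+1 * contr B x v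
  - s ^+ m.+1 / m.+1%:R * contr (symcov g A) x v
  + s ^+ m.+2 / m.+2%:R * c1 B Q x.

Definition chain_flux (m : nat) (A : tfield R n 2) (B : tfield R n 1) (t : R) (x v : pt) : R :=
  m%:R * t ^+ m.-1 * contr A x v - 2 * t ^+ m * force2 Q A x v
  + m.+1%:R * t ^+ m * contr B x v.

(* The zero covector field closes a chain. *)
Definition tzero m : tfield R n m := fun _ _ => 0.
Arguments tzero m : clear implicits.

Lemma contr_tzero m x v : contr (tzero m) x v = 0.
Proof. by rewrite /contr big1 // => idx _; rewrite mul0r. Qed.

Lemma add_natr_neq0 (a : R) (k : nat) : 0 < a -> a + k%:R != 0.
Proof. by move=> a0; rewrite gt_eqF //; have := ler0n R k; lra. Qed.

Section ChainAlongSolution.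
Context (I : set R) (q : R -> pt) (t : R).
Hypotheses (sol : is_solution g Q U I q) (It : I t).
Local Notation x := (q t).
Local Notation v := (derive1 q t).

Lemma is_derive_chain_block m (A A' : tfield R n 2) (B B' : tfield R n 1) :
  tsmooth U A -> tsymmetric U A -> tsmooth U B -> killing g U (symcov g A) ->
  (forall a b y, U y -> symcov g B (ix2 a b) y =
     - (3 / m.+1%:R) * c3 (symcov g A) a b Q y - m.+2%:R * A' (ix2 a b) y) ->
  (forall a y, U y -> pd a (c1 B Q) y =
     2 * m.+2%:R * c2 A' a Q y - (m.+3 * m.+2)%:R * B' (ix1 a) y) ->
  is_derive t 1 (fun s => chain_block m A B s (q s) (derive1 q s))
    (chain_flux m A B t x v - chain_flux m.+2 A' B' t x v).
Proof.
move=> sA syA sB kA hsymB hgradB; have Ux := solution_in_domain sol It.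
have DA := is_derive_monomial m (is_derive_quadratic sol It sA syA).
have DB := is_derive_monomial m.+1 (is_derive_linear sol It sB).
have DK := is_derive_monomial_mul m.+1 (m.+1%:R)^-1
  (is_derive_killing3 sol It kA (fun idx => symcov_differentiable idx oU mg sA Ux)).
have DV := is_derive_monomial_mul m.+2 (m.+2%:R)^-1
  (is_derive_scalar sol It (c1_differentiable sB sQ Ux)).
apply: is_derive_eq (is_derive_addf (is_derive_subf (is_derive_addf DA DB) DK) DV) _.
rewrite (contr_relation2 _ (fun a b => hsymB a b x Ux)).
rewrite (contr_relation1 _ (fun a => hgradB a x Ux)).
rewrite /chain_flux /=.
by field; rewrite !add_natr_neq0.
Qed.

Lemma is_derive_chain_top M (A : tfield R n 2) :
  tsmooth U A -> killing g U A ->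
  is_derive t 1 (fun s => s ^+ M * contr A (q s) (derive1 q s))
    (chain_flux M A (tzero 1) t x v).
Proof.
move=> sA kA; have Ux := solution_in_domain sol It.
have DA := is_derive_monomial M (is_derive_quadratic sol It sA kA.1).
apply: is_derive_eq DA _.
by rewrite (killing_symcov_contr0 _ kA Ux) /chain_flux contr_tzero; ring.
Qed.

Lemma is_derive_chain_potential (G : pt -> R) (A : tfield R n 2) (B : tfield R n 1) :
  smooth_on U G -> (forall a y, U y -> pd a G y = 2 * c2 A a Q y - B (ix1 a) y) ->
  is_derive t 1 (fun s => G (q s)) (- chain_flux 0 A B t x v).
Proof.
move=> sG hG; have Ux := solution_in_domain sol It.
apply: is_derive_eq (is_derive_scalar sol It (smooth_differentiable sG Ux)) _.
rewrite (@contr_relation1 _ _ Q _ A B _ _ 2 1); last by move=> a; rewrite hG // mul1r.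
by rewrite /chain_flux; ring.
Qed.

Lemma is_derive_chain_cubic_base (C : tfield R n 3) (A' : tfield R n 2) (B B' : tfield R n 1) :
  tsmooth U C -> killing g U C -> tsmooth U B ->
  (forall a b y, U y -> symcov g B (ix2 a b) y = 3 * c3 C a b Q y - A' (ix2 a b) y) ->
  (forall a y, U y -> pd a (c1 B Q) y = 2 * c2 A' a Q y - 2 * B' (ix1 a) y) ->
  is_derive t 1
    (fun s => contr C (q s) (derive1 q s) + contr B (q s) (derive1 q s) + s * c1 B Q (q s))
    (- chain_flux 1 A' B' t x v).
Proof.
move=> sC kC sB hsymB hgradB; have Ux := solution_in_domain sol It.
have DC := is_derive_killing3 sol It kC (fun idx => smooth_differentiable (sC idx) Ux).
have DB := is_derive_linear sol It sB.
have DV := is_derive_monomial 1 (is_derive_scalar sol It (c1_differentiable sB sQ Ux)).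
apply: is_derive_eq (is_derive_addf (is_derive_addf DC DB) DV) _.
rewrite (@contr_relation2 _ _ Q C A' _ _ _ 3 1); last by move=> a b; rewrite hsymB // mul1r.
rewrite (contr_relation1 _ (fun a => hgradB a x Ux)).
by rewrite /chain_flux /=; ring.
Qed.

End ChainAlongSolution.
End FirstIntegrals.
Arguments tzero {R n} m.

Section PolynomialIntegrals.
Context (R : realType) (n : nat).
Local Notation pt := 'rV[R]_n.
Context (U : set pt) (g : pt -> 'M[R]_n) (Q : pt -> pt).

Definition trunc_family (N : nat) (L : nat -> tfield R n 1) (k : nat) : tfield R n 1 :=
  if (k <= N)%N then L k else tzero 1.

Lemma cfi1_blocks (l : nat) (L2 : nat -> tfield R n 2) (L1 : nat -> tfield R n 1)
    (G : pt -> R) :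
  (fun t x v =>
      - (\sum_(j < l) t ^+ j.*2.+1 / (j.*2.+1)%:R * contr (symcov g (L2 j.*2)) x v)
      + \sum_(j < l.+1) t ^+ j.*2 * contr (L2 j.*2) x v
      + \sum_(1 <= j < l.+1) t ^+ j.*2.-1 * contr (L1 j.*2.-1) x v
      + \sum_(1 <= j < l.+1) t ^+ j.*2 / (j.*2)%:R * c1 (L1 j.*2.-1) Q x
      + G x) =
  (fun t x v => G x + \sum_(j < l) chain_block g Q (j.*2) (L2 j.*2) (L1 j.*2.+1) t x v
      + t ^+ l.*2 * contr (L2 l.*2) x v).
Proof.
apply/funext => t; apply/funext => x; apply/funext => v.
rewrite big_ord_recr /= !big_add1 /= !big_mkord.
under [X in _ + X + _ = _]eq_bigr do rewrite doubleS.
rewrite /chain_block !big_split /= sumrN; ring.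
Qed.

Lemma cfi2_blocks (l : nat) (L3 : tfield R n 3) (L2 : nat -> tfield R n 2)
    (L1 : nat -> tfield R n 1) :
  (fun t x v =>
      (contr L3 x v
       - \sum_(1 <= j < l.+1) t ^+ j.*2 / (j.*2)%:R * contr (symcov g (L2 j.*2.-1)) x v)
      + \sum_(j < l.+1) t ^+ j.*2.+1 * contr (L2 j.*2.+1) x v
      + \sum_(j < l.+1) t ^+ j.*2 * contr (L1 j.*2) x v
      + \sum_(j < l.+1) t ^+ j.*2.+1 / (j.*2.+1)%:R * c1 (L1 j.*2) Q x) =
  (fun t x v => (contr L3 x v + contr (L1 0%N) x v + t * c1 (L1 0%N) Q x)
      + \sum_(j < l) chain_block g Q (j.*2.+1) (L2 j.*2.+1) (L1 j.*2.+2) t x v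
      + t ^+ l.*2.+1 * contr (L2 l.*2.+1) x v).
Proof.
apply/funext => t; apply/funext => x; apply/funext => v.
rewrite big_ord_recr big_add1 /= big_mkord !big_ord_recl.
under [X in _ - X + _ + _ + _ = _]eq_bigr do rewrite doubleS.
under [X in _ + (_ + X) + _ = _]eq_bigr do rewrite lift0 doubleS.
under [X in _ + (_ + X) = _]eq_bigr do rewrite lift0 doubleS.
rewrite /chain_block !big_split /= sumrN expr0 expr1 divr1 mul1r; ring.
Qed.

Hypotheses (oU : open U) (mg : metric_on U g) (sQ : forall a, smooth_on U (fun x => Q x 0 a)).

Lemma cfi1 (l : nat) (L2 : nat -> tfield R n 2) (L1 : nat -> tfield R n 1) (G : pt -> R) :
  (1 <= l)%N ->
  (forall j, (j <= l)%N -> tsmooth U (L2 j.*2) /\ tsymmetric U (L2 j.*2)) ->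
  (forall j, (1 <= j <= l)%N -> tsmooth U (L1 j.*2.-1)) ->
  smooth_on U G ->
  (forall j, (j < l)%N -> killing g U (symcov g (L2 j.*2))) ->
  killing g U (L2 l.*2) ->
  (forall k, (2 <= k <= l.*2)%N -> ~~ odd k -> forall a b x, U x ->
     symcov g (L1 k.-1) (ix2 a b) x =
       - (3 / (k.-1)%:R) * c3 (symcov g (L2 (k - 2)%N)) a b Q x
       - k%:R * L2 k (ix2 a b) x) ->
  (forall a x, U x ->
     pd a (c1 (L1 l.*2.-1) Q) x = 4 * l%:R * c2 (L2 l.*2) a Q x) ->
  (forall k, (3 <= k <= l.*2.-1)%N -> odd k -> forall a x, U x ->
     pd a (c1 (L1 (k - 2)%N) Q) x =
       2 * (k.-1)%:R * c2 (L2 k.-1) a Q x - (k * k.-1)%:R * L1 k (ix1 a) x) ->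
  (forall a x, U x -> pd a G x = 2 * c2 (L2 0%N) a Q x - L1 1%N (ix1 a) x) ->
  first_integral g Q U (fun t x v =>
      - (\sum_(j < l) t ^+ j.*2.+1 / (j.*2.+1)%:R * contr (symcov g (L2 j.*2)) x v)
      + \sum_(j < l.+1) t ^+ j.*2 * contr (L2 j.*2) x v
      + \sum_(1 <= j < l.+1) t ^+ j.*2.-1 * contr (L1 j.*2.-1) x v
      + \sum_(1 <= j < l.+1) t ^+ j.*2 / (j.*2)%:R * c1 (L1 j.*2.-1) Q x
      + G x).
Proof.
move=> l1 hL2 hL1 sG kL2 kL2l hsym htop hgrad hG.
pose L1t := trunc_family l.*2.-1 L1.
have L1tE j : (j < l)%N -> L1t j.*2.+1 = L1 j.*2.+1.
  by move=> jl; rewrite /L1t /trunc_family ifT //; lia.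
have sym_j j : (j < l)%N -> forall a b y, U y ->
    symcov g (L1 j.*2.+1) (ix2 a b) y = - (3 / (j.*2).+1%:R) * c3 (symcov g (L2 j.*2)) a b Q y
      - (j.*2).+2%:R * L2 (j.*2).+2 (ix2 a b) y.
  move=> jl a b y Uy.
  have kj : (2 <= j.*2.+2 <= l.*2)%N by lia.
  have ev : ~~ odd j.*2.+2 by rewrite /= negbK odd_double.
  have := hsym _ kj ev a b y Uy.
  by have -> : (j.*2.+2 - 2 = j.*2)%N by lia.
have grad_j j : (j < l)%N -> forall a y, U y ->
    pd a (c1 (L1 j.*2.+1) Q) y = 2 * (j.*2).+2%:R * c2 (L2 (j.*2).+2) a Q y
      - ((j.*2).+3 * (j.*2).+2)%:R * L1t (j.*2).+3 (ix1 a) y.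
  move=> jl a y Uy; have [jl'|jl'] := ltnP j.+1 l.
    have kj : (3 <= j.*2.+3 <= l.*2.-1)%N by lia.
    have od : odd j.*2.+3 by rewrite /= negbK odd_double.
    have := hgrad _ kj od a y Uy.
    have -> : (j.*2.+3 - 2 = j.*2.+1)%N by lia.
    by rewrite -doubleS L1tE.
  have lj : l = j.+1 by lia.
  rewrite /L1t /trunc_family ifF; last by lia.
  have := htop a y Uy; rewrite lj doubleS /= => ->.
  by rewrite /tzero -[(j.*2).+2]doubleS -muln2 natrM; ring.
rewrite cfi1_blocks; apply: first_integral_of_is_derive => I q t sol It.
pose E j := chain_flux Q (j.*2) (L2 j.*2) (L1t j.*2.+1) t (q t) (derive1 q t).
apply: (@is_derive_telescope _ l _
  (fun j s => chain_block g Q (j.*2) (L2 j.*2) (L1 j.*2.+1) s (q s) (derive1 q s)) _ E).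
- rewrite /E -[L1t 1%N]/(L1t 0.*2.+1) L1tE //.
  by apply: (is_derive_chain_potential sol It sG); rewrite double0.
- move=> j jl; rewrite /E L1tE // doubleS.
  have [sA syA] := hL2 j (ltnW jl).
  have sB : tsmooth U (L1 j.*2.+1) by have := hL1 j.+1; rewrite doubleS; apply; lia.
  exact: (is_derive_chain_block oU mg sQ sol It sA syA sB (kL2 j jl) (sym_j j jl) (grad_j j jl)).
- rewrite /E /L1t /trunc_family ifF; last by lia.
  exact: (is_derive_chain_top sol It _ (hL2 l (leqnn l)).1 kL2l).
Qed.

Lemma cfi2 (l : nat) (L3 : tfield R n 3) (L2 : nat -> tfield R n 2)
    (L1 : nat -> tfield R n 1) :
  tsmooth U L3 -> killing g U L3 ->
  (forall j, (j <= l)%N -> tsmooth U (L2 j.*2.+1) /\ tsymmetric U (L2 j.*2.+1)) ->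
  (forall j, (j <= l)%N -> tsmooth U (L1 j.*2)) ->
  (forall j, (j < l)%N -> killing g U (symcov g (L2 j.*2.+1))) ->
  killing g U (L2 l.*2.+1) ->
  (forall a b x, U x ->
     symcov g (L1 0%N) (ix2 a b) x = 3 * c3 L3 a b Q x - L2 1%N (ix2 a b) x) ->
  (forall k, (3 <= k <= l.*2.+1)%N -> odd k -> forall a b x, U x ->
     symcov g (L1 k.-1) (ix2 a b) x =
       - (3 / (k.-1)%:R) * c3 (symcov g (L2 (k - 2)%N)) a b Q x
       - k%:R * L2 k (ix2 a b) x) ->
  (forall a x, U x ->
     pd a (c1 (L1 l.*2) Q) x = 2 * (l.*2.+1)%:R * c2 (L2 l.*2.+1) a Q x) ->
  (forall k, (2 <= k <= l.*2)%N -> ~~ odd k -> forall a x, U x ->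
     pd a (c1 (L1 (k - 2)%N) Q) x =
       2 * (k.-1)%:R * c2 (L2 k.-1) a Q x - (k * k.-1)%:R * L1 k (ix1 a) x) ->
  first_integral g Q U (fun t x v =>
      (contr L3 x v
       - \sum_(1 <= j < l.+1) t ^+ j.*2 / (j.*2)%:R * contr (symcov g (L2 j.*2.-1)) x v)
      + \sum_(j < l.+1) t ^+ j.*2.+1 * contr (L2 j.*2.+1) x v
      + \sum_(j < l.+1) t ^+ j.*2 * contr (L1 j.*2) x v
      + \sum_(j < l.+1) t ^+ j.*2.+1 / (j.*2.+1)%:R * c1 (L1 j.*2) Q x).
Proof.
move=> sL3 kL3 hL2 sL1 kL2 kL2l hbase hsym htop hgrad.
pose L1t := trunc_family l.*2 L1.
have L1tE j : (j <= l)%N -> L1t j.*2 = L1 j.*2.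
  by move=> jl; rewrite /L1t /trunc_family ifT // leq_double.
have sym_j j : (j < l)%N -> forall a b y, U y ->
    symcov g (L1 j.*2.+2) (ix2 a b) y = - (3 / (j.*2.+1).+1%:R) * c3 (symcov g (L2 j.*2.+1)) a b Q y
      - (j.*2.+1).+2%:R * L2 (j.*2.+1).+2 (ix2 a b) y.
  move=> jl a b y Uy.
  have kj : (3 <= j.*2.+3 <= l.*2.+1)%N by lia.
  have od : odd j.*2.+3 by rewrite /= negbK odd_double.
  have := hsym _ kj od a b y Uy.
  by have -> : (j.*2.+3 - 2 = j.*2.+1)%N by lia.
have grad_j j : (j <= l)%N -> forall a y, U y ->
    pd a (c1 (L1 j.*2) Q) y = 2 * (j.*2).+1%:R * c2 (L2 (j.*2).+1) a Q y
      - ((j.*2).+2 * (j.*2).+1)%:R * L1t (j.*2).+2 (ix1 a) y.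
  move=> jl a y Uy; have [jl'|jl'] := ltnP j l.
    have kj : (2 <= j.*2.+2 <= l.*2)%N by lia.
    have ev : ~~ odd j.*2.+2 by rewrite /= negbK odd_double.
    have := hgrad _ kj ev a y Uy.
    have -> : (j.*2.+2 - 2 = j.*2)%N by lia.
    by rewrite -doubleS L1tE.
  have lj : l = j by lia.
  rewrite /L1t /trunc_family ifF; last by lia.
  by rewrite -lj htop // /tzero mulr0 subr0.
rewrite cfi2_blocks; apply: first_integral_of_is_derive => I q t sol It.
pose E j := chain_flux Q (j.*2.+1) (L2 j.*2.+1) (L1t j.*2.+2) t (q t) (derive1 q t).
apply: (@is_derive_telescope _ l _
  (fun j s => chain_block g Q (j.*2.+1) (L2 j.*2.+1) (L1 j.*2.+2) s (q s) (derive1 q s)) _ E).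
- apply: (is_derive_chain_cubic_base sQ sol It sL3 kL3 (sL1 0%N (leq0n l)) hbase).
  by move=> a y Uy; rewrite (grad_j 0%N) // mulr1.
- move=> j jl; rewrite /E -doubleS L1tE // doubleS.
  have [sA syA] := hL2 j (ltnW jl).
  have sB : tsmooth U (L1 j.*2.+2) by rewrite -doubleS; apply: sL1.
  apply: (is_derive_chain_block oU mg sQ sol It sA syA sB (kL2 j jl) (sym_j j jl)).
  by have := grad_j j.+1 jl; rewrite doubleS.
- rewrite /E /L1t /trunc_family ifF; last by lia.
  exact: (is_derive_chain_top sol It _ (hL2 l (leqnn l)).1 kL2l).
Qed.

End PolynomialIntegrals.

Unset Implicit Arguments.

Theorem theorem1 (R : realType) (n : nat) (U : set 'rV[R]_n)
  (g : 'rV[R]_n -> 'M[R]_n) (Q : 'rV[R]_n -> 'rV[R]_n) :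
  open U -> metric_on U g -> (forall a, smooth_on U (fun x => Q x 0 a)) ->
  (* (CFI 1) *)
  (forall (l : nat) (L2 : nat -> tfield R n 2) (L1 : nat -> tfield R n 1)
          (G : 'rV[R]_n -> R),
    (1 <= l)%N ->
    (forall j, (j <= l)%N -> tsmooth U (L2 j.*2) /\ tsymmetric U (L2 j.*2)) ->
    (forall j, (1 <= j <= l)%N -> tsmooth U (L1 j.*2.-1)) ->
    smooth_on U G ->
    (forall j, (j < l)%N -> killing g U (symcov g (L2 j.*2))) ->
    killing g U (L2 l.*2) ->
    (forall k, (2 <= k <= l.*2)%N -> ~~ odd k -> forall a b x, U x ->
       symcov g (L1 k.-1) (ix2 a b) x =
         - (3 / (k.-1)%:R) * c3 (symcov g (L2 (k - 2)%N)) a b Q x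
         - k%:R * L2 k (ix2 a b) x) ->
    (forall a x, U x ->
       pd a (c1 (L1 l.*2.-1) Q) x = 4 * l%:R * c2 (L2 l.*2) a Q x) ->
    (forall k, (3 <= k <= l.*2.-1)%N -> odd k -> forall a x, U x ->
       pd a (c1 (L1 (k - 2)%N) Q) x =
         2 * (k.-1)%:R * c2 (L2 k.-1) a Q x - (k * k.-1)%:R * L1 k (ix1 a) x) ->
    (forall a x, U x -> pd a G x = 2 * c2 (L2 0%N) a Q x - L1 1%N (ix1 a) x) ->
    first_integral g Q U (fun t x v =>
        - (\sum_(j < l) t ^+ j.*2.+1 / (j.*2.+1)%:R * contr (symcov g (L2 j.*2)) x v)
        + \sum_(j < l.+1) t ^+ j.*2 * contr (L2 j.*2) x v
        + \sum_(1 <= j < l.+1) t ^+ j.*2.-1 * contr (L1 j.*2.-1) x v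
        + \sum_(1 <= j < l.+1) t ^+ j.*2 / (j.*2)%:R * c1 (L1 j.*2.-1) Q x
        + G x)) /\
  (* (CFI 2) *)
  (forall (l : nat) (L3 : tfield R n 3) (L2 : nat -> tfield R n 2)
          (L1 : nat -> tfield R n 1),
    tsmooth U L3 -> killing g U L3 ->
    (forall j, (j <= l)%N -> tsmooth U (L2 j.*2.+1) /\ tsymmetric U (L2 j.*2.+1)) ->
    (forall j, (j <= l)%N -> tsmooth U (L1 j.*2)) ->
    (forall j, (j < l)%N -> killing g U (symcov g (L2 j.*2.+1))) ->
    killing g U (L2 l.*2.+1) ->
    (forall a b x, U x ->
       symcov g (L1 0%N) (ix2 a b) x = 3 * c3 L3 a b Q x - L2 1%N (ix2 a b) x) ->
    (forall k, (3 <= k <= l.*2.+1)%N -> odd k -> forall a b x, U x ->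
       symcov g (L1 k.-1) (ix2 a b) x =
         - (3 / (k.-1)%:R) * c3 (symcov g (L2 (k - 2)%N)) a b Q x
         - k%:R * L2 k (ix2 a b) x) ->
    (forall a x, U x ->
       pd a (c1 (L1 l.*2) Q) x = 2 * (l.*2.+1)%:R * c2 (L2 l.*2.+1) a Q x) ->
    (forall k, (2 <= k <= l.*2)%N -> ~~ odd k -> forall a x, U x ->
       pd a (c1 (L1 (k - 2)%N) Q) x =
         2 * (k.-1)%:R * c2 (L2 k.-1) a Q x - (k * k.-1)%:R * L1 k (ix1 a) x) ->
    first_integral g Q U (fun t x v =>
        (contr L3 x v
         - \sum_(1 <= j < l.+1) t ^+ j.*2 / (j.*2)%:R * contr (symcov g (L2 j.*2.-1)) x v)
        + \sum_(j < l.+1) t ^+ j.*2.+1 * contr (L2 j.*2.+1) x v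
        + \sum_(j < l.+1) t ^+ j.*2 * contr (L1 j.*2) x v
        + \sum_(j < l.+1) t ^+ j.*2.+1 / (j.*2.+1)%:R * c1 (L1 j.*2) Q x)) /\
  (* (CFI 3) *)
  (forall (lam : R) (L2 : tfield R n 2) (L1 : tfield R n 1),
    lam != 0 ->
    tsmooth U L2 -> tsymmetric U L2 -> tsmooth U L1 ->
    killing g U (symcov g L2) ->
    (forall a b x, U x ->
       symcov g L1 (ix2 a b) x =
         - (3 / lam) * c3 (symcov g L2) a b Q x - lam * L2 (ix2 a b) x) ->
    (forall a x, U x ->
       pd a (c1 L1 Q) x = 2 * lam * c2 L2 a Q x - lam ^+ 2 * L1 (ix1 a) x) ->
    first_integral g Q U (fun t x v =>
        expR (lam * t) *
          (- contr (symcov g L2) x v + lam * contr L2 x v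
           + lam * contr L1 x v + c1 L1 Q x))).
Proof.
move=> oU mg sQ; split; first exact: cfi1.
by split; [exact: cfi2 | exact: cfi3].
Qed.
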